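(* Let $t(x_1,\dots,x_n)$ be any Łukasiewicz $\mu$-term. For every input vector $\vec r=(r_1,\dots,r_n)\in[0,1]^n$, the evaluation algorithm described in the context terminates with a conditioned linear expression $C_{\vec r}\vdash e_{\vec r}$ in variables $x_1,\dots,x_n$ satisfying (P1) $C_{\vec r}(\vec r)$ is true, and (P2) for all $\vec s\in\mathbb R^n$, if $C_{\vec r}(\vec s)$ is true then $\vec s\in[0,1]^n$ and $e_{\vec r}(\vec s)=t(\vec s)$. Moreover, the set $\{C_{\vec r}\vdash e_{\vec r}\mid\vec r\in[0,1]^n\}$ of possible results is finite, and hence is a system of conditioned linear expressions representing the function $t:[0,1]^n\to[0,1]$.
   Context: Łukasiewicz $\mu$-terms: $t::=x\mid\underline0\mid\underline1\mid r\,t\mid t\sqcup t\mid t\sqcap t\mid t\oplus t\mid t\odot t\mid\mu x.t\mid\nu x.t$, with $r\in[0,1]$ real; $\mu,\nu$ bind. $t(x_1,\dots,x_n)$ means free variables are among $x_1,\dots,x_n$. Value at $\vec r\in[0,1]^n$: $x_i\mapsto r_i$, $\underline0\mapsto0$, $\underline1\mapsto1$, $r\,t\mapsto r\cdot t(\vec r)$, $\sqcup,\sqcap$ max/min, $t_1\oplus t_2\mapsto\min(t_1(\vec r)+t_2(\vec r),1)$, $t_1\odot t_2\mapsto\max(t_1(\vec r)+t_2(\vec r)-1,0)$, $(\mu y.t)(\vec r)$ and $(\nu y.t)(\vec r)$ the least and greatest fixed points of the monotone map $r'\mapsto t(\vec r,r')$ on $[0,1]$. A linear expression in $x_1,\dots,x_n$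 is $q_1x_1+\dots+q_nx_n+q$ ($q_i,q$ real). A conditioned linear expression $C\vdash e$ consists of a linear expression $e$ and a finite set $C$ of inequalities $e_1<e_2$ or $e_1\le e_2$ between linear expressions; $C(\vec r)$ is the conjunction of its instances. A finite set $\mathcal F$ of conditioned linear expressions represents $f:[0,1]^n\to[0,1]$ if for every $\vec r\in[0,1]^n$ some $(C\vdash e)\in\mathcal F$ has $C(\vec r)$ true, and whenever $(C\vdash e)\in\mathcal F$ and $C(\vec r)$ is true ($\vec r\in[0,1]^n$), $e(\vec r)=f(\vec r)$. For an expression/constraint in $x_1,\dots,x_{n+1}$, $C(x_1,\dots,x_n,d)$ denotes substitution of a linear expression $d(x_1,\dots,x_n)$ for $x_{n+1}$. The algorithm (real-number model of computation) on input $t(x_1,\dots,x_n)$ and $\vec r$ returns $C\vdash e$, recursively on $t$. Atoms: return the range constraints $\{0\le x_k\le1\}_k$ with $e$ equal to $x_i$, $0$ or $1$. For compound non-fixed-point terms, recursively obtain $C_i\vdash e_i$ for the subterms and return the union of the $C_i$ together with the constraint selecting the linear piece of the connective valid at $\vec r$; e.g. for $t_1\oplus t_2$: if $e_1(\vec r)+e_2(\vec r)\le1$ return $C_1,C_2,e_1+e_2\le1\vdash e_1+e_2$, otherwise $C_1,C_2,e_1+e_2\ge1\vdash 1$ (analogously for $\sqcup,\sqcap,\odot$; for $r\,t_1$ return $C_1\vdash r e_1$). For $\mu x_{n+1}.t'$: start with $D=\emptyset$, $d=0$. Loop: recursively compute $t'$ at $(\vec r,d(\vec r))$ as $C\vdash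 e$ with $e=q_1x_1+\dots+q_nx_n+q_{n+1}x_{n+1}+q$. If $q_{n+1}\ne1$, let $f=\frac1{1-q_{n+1}}(q_1x_1+\dots+q_nx_n+q)$; if $C(\vec r,f(\vec r))$ holds, return $D\cup C(\vec x,d(\vec x))\cup C(\vec x,f(\vec x))\vdash f$; otherwise let $N$ be the negation of $e_1(\vec x,f(\vec x))\vartriangleleft e_2(\vec x,f(\vec x))$ for a chosen inequality $e_1\vartriangleleft e_2$ of $C$ false at $(\vec r,f(\vec r))$, and go to the next-approximation step. If $q_{n+1}=1$: if $q_1r_1+\dots+q_nr_n+q=0$ return $D\cup C(\vec x,d(\vec x))\cup\{q_1x_1+\dots+q_nx_n+q=0\}\vdash d$; otherwise let $N$ be whichever of $q_1x_1+\dots+q_nx_n+q<0$, $0<q_1x_1+\dots+q_nx_n+q$ holds at $\vec r$, and go to the next-approximation step. Next approximation: write $C$ as $C'\cup\{x_{n+1}>a_i\}\cup\{x_{n+1}\ge a_i\}\cup\{x_{n+1}\le b_i\}_{1\le i\le m'}\cup\{x_{n+1}<b_i\}_{m'<i\le m}$ with $C',a_i,b_i$ not involving $x_{n+1}$; choose $j$ with $b_j(\vec r)\le b_i(\vec r)$ for all $i\le m$; replace $D$ by $D\cup C(\vec x,d(\vec x))\cup\{N\}\cup\{b_j\le b_i\mid1\le i\le m\}$ and $d$ by $e(\vec x,b_j(\vec x))$, and repeat the loop. For $\nu x_{n+1}.t'$ the algorithm is the order-dual (start from $d=1$, use the lower bounds $a_i$, choosing $a_j$ maximal at $\vec r$).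 *)

From Stdlib Require Import Reals Lra List.
Import ListNotations.
Open Scope R_scope.

(** * Lukasiewicz mu-terms (de Bruijn *levels*: [TVar i] is x_(i+1); in a
    context of n free variables, [TMu t] / [TNu t] bind x_(n+1), i.e. level n,
    inside t). *)
Inductive term : Type :=
| TVar : nat -> term
| TZero : term
| TOne : term
| TScale : R -> term -> term
| TJoin : term -> term -> term
| TMeet : term -> term -> term
| TOplus : term -> term -> term
| TOdot : term -> term -> term
| TMu : term -> term
| TNu : term -> term.

Fixpoint wf (n : nat) (t : term) : Prop :=
  match t with
  | TVar i => (i < n)%nat
  | TZero | TOne => True
  | TScale r t1 => 0 <= r <= 1 /\ wf n t1
  | TJoin a b | TMeet a b | TOplus a b | TOdot a b => wf n a /\ wf n b
  | TMu t1 | TNu t1 => wf (S n) t1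
  end.

Fixpoint sem (t : term) (env : list R) (v : R) : Prop :=
  match t with
  | TVar i => v = nth i env 0
  | TZero => v = 0
  | TOne => v = 1
  | TScale r t1 => exists u, sem t1 env u /\ v = r * u
  | TJoin a b => exists u w, sem a env u /\ sem b env w /\ v = Rmax u w
  | TMeet a b => exists u w, sem a env u /\ sem b env w /\ v = Rmin u w
  | TOplus a b => exists u w, sem a env u /\ sem b env w /\ v = Rmin (u + w) 1
  | TOdot a b => exists u w, sem a env u /\ sem b env w /\ v = Rmax (u + w - 1) 0
  | TMu t1 => 0 <= v <= 1 /\ sem t1 (env ++ [v]) v /\
      (forall w, 0 <= w <= 1 -> sem t1 (env ++ [w]) w -> v <= w)
  | TNu t1 => 0 <= v <= 1 /\ sem t1 (env ++ [v]) v /\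
      (forall w, 0 <= w <= 1 -> sem t1 (env ++ [w]) w -> w <= v)
  end.

Record linexp : Type := LE { lcoef : list R; lcst : R }.

Fixpoint dotl (q s : list R) : R :=
  match q, s with
  | a :: q', b :: s' => a * b + dotl q' s'
  | _, _ => 0
  end.

Definition leval (e : linexp) (s : list R) : R := dotl (lcoef e) s + lcst e.

Fixpoint addl (q1 q2 : list R) : list R :=
  match q1, q2 with
  | [], q => q
  | q, [] => q
  | a :: x, b :: y => (a + b) :: addl x y
  end.

Definition ladd (e1 e2 : linexp) : linexp := LE (addl (lcoef e1) (lcoef e2)) (lcst e1 + lcst e2).
Definition lscale (c : R) (e : linexp) : linexp := LE (map (Rmult c) (lcoef e)) (c * lcst e).
Definition lsub (e1 e2 : linexp) : linexp := ladd e1 (lscale (-1) e2).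
Definition lconstant (c : R) : linexp := LE [] c.
Definition lvar (i : nat) : linexp := LE (repeat 0 i ++ [1]) 0.
(** coefficient of x_(i+1) *)
Definition coef (i : nat) (e : linexp) : R := nth i (lcoef e) 0.
Definition ltrunc (n : nat) (e : linexp) : linexp := LE (firstn n (lcoef e)) (lcst e).
(** e(x_1,...,x_n,d) : substitute d for x_(n+1) *)
Definition lsubst (n : nat) (e d : linexp) : linexp :=
  ladd (ltrunc n e) (lscale (coef n e) d).

Inductive constr : Type :=
| CLt : linexp -> linexp -> constr
| CLe : linexp -> linexp -> constr.

Definition cholds (c : constr) (s : list R) : Prop :=
  match c with
  | CLt a b => leval a s < leval b s
  | CLe a b => leval a s <= leval b s
  end.

Definition Choldsl (C : list constr) (s : list R) : Prop := Forall (fun c => cholds c s) C.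

Definition choldsb (c : constr) (s : list R) : bool :=
  match c with
  | CLt a b => if Rlt_dec (leval a s) (leval b s) then true else false
  | CLe a b => if Rle_dec (leval a s) (leval b s) then true else false
  end.

Definition Choldslb (C : list constr) (s : list R) : bool := forallb (fun c => choldsb c s) C.

Definition csubst (n : nat) (d : linexp) (c : constr) : constr :=
  match c with
  | CLt a b => CLt (lsubst n a d) (lsubst n b d)
  | CLe a b => CLe (lsubst n a d) (lsubst n b d)
  end.

Definition cneg (c : constr) : constr :=
  match c with
  | CLt a b => CLe b a
  | CLe a b => CLt b a
  end.

Definition range (n : nat) : list constr :=
  flat_map (fun k => [CLe (lconstant 0) (lvar k); CLe (lvar k) (lconstant 1)]) (seq 0 n).

(** A constraint a <| b is rewritten as g := b - a |> 0 with g = c x_(n+1) + h.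
    If c < 0 it is an upper bound x_(n+1) <| -h/c; if c > 0 a lower bound
    x_(n+1) |> -h/c.  [bound n c] returns -h/c. *)
Definition cgap (c : constr) : linexp :=
  match c with CLt a b | CLe a b => lsub b a end.

Definition bound (n : nat) (c : constr) : linexp :=
  let g := cgap c in lscale (- / coef n g) (ltrunc n g).

Definition upper_bounds (n : nat) (C : list constr) : list linexp :=
  map (bound n) (filter (fun c => if Rlt_dec (coef n (cgap c)) 0 then true else false) C).

Definition lower_bounds (n : nat) (C : list constr) : list linexp :=
  map (bound n) (filter (fun c => if Rlt_dec 0 (coef n (cgap c)) then true else false) C).

Definition result := (list constr * linexp)%type.

(** Choice oracles for the non-deterministic choices of the algorithm. *)
Definition pick_false_spec (pf : list constr -> list R -> constr) : Prop :=
  forall C s, (exists c, In c C /\ ~ cholds c s) -> In (pf C s) C /\ ~ cholds (pf C s) s.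

Definition pick_min_spec (pm : list linexp -> list R -> linexp) : Prop :=
  forall L s, L <> [] -> In (pm L s) L /\ forall b, In b L -> leval (pm L s) s <= leval b s.

Definition pick_max_spec (pm : list linexp -> list R -> linexp) : Prop :=
  forall L s, L <> [] -> In (pm L s) L /\ forall b, In b L -> leval b s <= leval (pm L s) s.

(** * The algorithm, with fuel (None = out of fuel / stuck). *)
Section Alg.
Variable pf : list constr -> list R -> constr.
Variable pmin : list linexp -> list R -> linexp.
Variable pmax : list linexp -> list R -> linexp.

Fixpoint alg (fuel : nat) (n : nat) (t : term) (r : list R) {struct fuel} : option result :=
  match fuel with
  | O => None
  | S k =>
    let bin (a b : term) (f : list constr -> linexp -> list constr -> linexp -> result) :=
      match alg k n a r, alg k n b r with
      | Some (C1, e1), Some (C2, e2) => Some (f C1 e1 C2 e2)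
      | _, _ => None
      end in
    let fixloop (isnu : bool) (t' : term) : option result :=
      (fix loop (j : nat) (D : list constr) (d : linexp) {struct j} : option result :=
        match j with
        | O => None
        | S j' =>
          match alg k (S n) t' (r ++ [leval d r]) with
          | None => None
          | Some (C, e) =>
            let q := coef n e in
            let h := ltrunc n e in
            let next (N : constr) : option result :=
              let bs := if isnu then lower_bounds n C else upper_bounds n C in
              match bs with
              | [] => None
              | _ =>
                let bj := if isnu then pmax bs r else pmin bs r in
                let newc := map (fun b => if isnu then CLe b bj else CLe bj b) bs in
                loop j' (D ++ map (csubst n d) C ++ [N] ++ newc) (lsubst n e bj)
              end in
            if Req_EM_T q 1 then
              if Req_EM_T (leval h r) 0 then
                Some (D ++ map (csubst n d) C ++ [CLe h (lconstant 0); CLe (lconstant 0) h], d)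
              else if Rlt_dec (leval h r) 0 then next (CLt h (lconstant 0))
              else next (CLt (lconstant 0) h)
            else
              let f := lscale (/ (1 - q)) h in
              let rf := r ++ [leval f r] in
              if Choldslb C rf then
                Some (D ++ map (csubst n d) C ++ map (csubst n f) C, f)
              else next (cneg (csubst n f (pf C rf)))
          end
        end) k [] (lconstant (if isnu then 1 else 0)) in
    match t with
    | TVar i => Some (range n, lvar i)
    | TZero => Some (range n, lconstant 0)
    | TOne => Some (range n, lconstant 1)
    | TScale c t1 =>
        match alg k n t1 r with
        | Some (C1, e1) => Some (C1, lscale c e1)
        | None => None
        end
    | TJoin a b => bin a b (fun C1 e1 C2 e2 =>
        if Rle_dec (leval e1 r) (leval e2 r)
        then (C1 ++ C2 ++ [CLe e1 e2], e2)
        else (C1 ++ C2 ++ [CLe e2 e1], e1))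
    | TMeet a b => bin a b (fun C1 e1 C2 e2 =>
        if Rle_dec (leval e1 r) (leval e2 r)
        then (C1 ++ C2 ++ [CLe e1 e2], e1)
        else (C1 ++ C2 ++ [CLe e2 e1], e2))
    | TOplus a b => bin a b (fun C1 e1 C2 e2 =>
        if Rle_dec (leval (ladd e1 e2) r) 1
        then (C1 ++ C2 ++ [CLe (ladd e1 e2) (lconstant 1)], ladd e1 e2)
        else (C1 ++ C2 ++ [CLe (lconstant 1) (ladd e1 e2)], lconstant 1))
    | TOdot a b => bin a b (fun C1 e1 C2 e2 =>
        if Rle_dec 1 (leval (ladd e1 e2) r)
        then (C1 ++ C2 ++ [CLe (lconstant 1) (ladd e1 e2)], lsub (ladd e1 e2) (lconstant 1))
        else (C1 ++ C2 ++ [CLe (ladd e1 e2) (lconstant 1)], lconstant 0))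
    | TMu t1 => fixloop false t1
    | TNu t1 => fixloop true t1
    end
  end.

End Alg.

Definition alg_returns pf pmin pmax (n : nat) (t : term) (r : list R) (res : result) : Prop :=
  exists fuel, alg pf pmin pmax fuel n t r = Some res.

Definition in_cube (n : nat) (r : list R) : Prop :=
  length r = n /\ Forall (fun x => 0 <= x <= 1) r.

Definition represents (n : nat) (F : list result) (t : term) : Prop :=
  (forall r, in_cube n r -> exists Ce, In Ce F /\ Choldsl (fst Ce) r) /\
  (forall Ce r, In Ce F -> in_cube n r -> Choldsl (fst Ce) r -> sem t r (leval (snd Ce) r)).

From Pilot Require Import Defs.
From Stdlib Require Import Reals List Lra Lia Classical ClassicalEpsilon.
Import ListNotations.
Open Scope R_scope.

(* For a connective the returned region is the intersection
   of the regions of the operands with the constraint selecting the linear piece, so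
   termination, correctness and finiteness are inherited from the operands.
   For [mu x.t'] the loop keeps the invariant that the approximation [d] lies below
   every fixed point of [t'(s, -)], for all [s] in the region [D] accumulated so far.
   On the region [C] returned for [t'] at [(r, d r)], [t'(s, x)] is the affine [e(s, x)].
   Either the fixed point of [e] (or [d] itself when [e] is the identity) lies in [C]
   and is then the least fixed point, or the added constraint [N] rules out fixed
   points of [e] in [C]; then, by monotonicity and the intermediate value theorem for
   affine maps, the next approximation [e(s, b_j s)] still lies below every fixed
   point.  Each round moves [d r] past all of the region [C] it used, so each of the
   finitely many possible results of [t'] is used at most once: this bounds the number
   of rounds, and the possible results of the loop can be enumerated independently of
   [r].  The [nu] case is the order dual; both are treated at once by parametrising
   every order statement by the direction of iteration. *)

Lemma dotl_nil_r q : dotl q [] = 0.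
Proof. destruct q; reflexivity. Qed.

Lemma dotl_addl q1 q2 s : dotl (addl q1 q2) s = dotl q1 s + dotl q2 s.
Proof.
  revert q2 s; induction q1 as [|a q1 IH]; intros q2 s; simpl; [lra|].
  destruct q2 as [|b q2]; destruct s as [|c s]; simpl; try lra.
  rewrite IH; ring.
Qed.

Lemma dotl_map_mult q c s : dotl (map (Rmult c) q) s = c * dotl q s.
Proof.
  revert s; induction q as [|a q IH]; intros s; simpl; [ring|].
  destruct s; simpl; [ring|]. rewrite IH; ring.
Qed.

Lemma dotl_snoc q s x :
  dotl q (s ++ [x]) = dotl (firstn (length s) q) s + nth (length s) q 0 * x.
Proof.
  revert q; induction s as [|b s IH]; intros [|a q]; simpl; try ring.
  - rewrite dotl_nil_r; ring.
  - rewrite IH; ring.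
Qed.

Lemma dotl_unit i s : dotl (repeat 0 i ++ [1]) s = nth i s 0.
Proof.
  revert s; induction i as [|i IH]; intros [|a s]; simpl; auto.
  - destruct s; simpl; ring.
  - rewrite IH; ring.
Qed.

Lemma leval_ladd a b s : leval (ladd a b) s = leval a s + leval b s.
Proof. unfold leval, ladd; simpl. rewrite dotl_addl. ring. Qed.

Lemma leval_lscale c a s : leval (lscale c a) s = c * leval a s.
Proof. unfold leval, lscale; simpl. rewrite dotl_map_mult. ring. Qed.

Lemma leval_lsub a b s : leval (lsub a b) s = leval a s - leval b s.
Proof. unfold lsub. rewrite leval_ladd, leval_lscale. ring. Qed.

Lemma leval_lconstant c s : leval (lconstant c) s = c.
Proof. unfold leval, lconstant; simpl. ring. Qed.

Lemma leval_lvar i s : leval (lvar i) s = nth i s 0.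
Proof. unfold leval, lvar; simpl. rewrite dotl_unit. ring. Qed.

Lemma leval_snoc n e s x : length s = n ->
  leval e (s ++ [x]) = leval (ltrunc n e) s + coef n e * x.
Proof. intros <-. unfold leval, ltrunc, coef; simpl. rewrite dotl_snoc. ring. Qed.

Lemma leval_lsubst n e d s : length s = n ->
  leval (lsubst n e d) s = leval e (s ++ [leval d s]).
Proof.
  intros Hs. unfold lsubst. rewrite leval_ladd, leval_lscale, (leval_snoc n e s); auto.
Qed.

Lemma Choldsl_app C1 C2 s : Choldsl (C1 ++ C2) s <-> Choldsl C1 s /\ Choldsl C2 s.
Proof. apply Forall_app. Qed.

Lemma Choldsl_In C s c : Choldsl C s -> In c C -> cholds c s.
Proof. unfold Choldsl; rewrite Forall_forall; auto. Qed.

Lemma not_Choldsl C s : ~ Choldsl C s -> exists c, In c C /\ ~ cholds c s.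
Proof.
  intros H. apply NNPP; intros Hn. apply H. apply Forall_forall.
  intros c Hc. apply NNPP; eauto.
Qed.

Lemma Choldslb_spec C s : Choldslb C s = true <-> Choldsl C s.
Proof.
  unfold Choldslb, Choldsl. rewrite forallb_forall, Forall_forall.
  split; intros H c Hc; specialize (H c Hc); revert H;
    destruct c; simpl; [destruct Rlt_dec|destruct Rle_dec|destruct Rlt_dec|destruct Rle_dec];
    auto; discriminate.
Qed.

Lemma cholds_cneg c s : cholds (cneg c) s <-> ~ cholds c s.
Proof. destruct c; simpl; split; intros; lra. Qed.

Lemma cholds_csubst n d c s : length s = n ->
  cholds (csubst n d c) s <-> cholds c (s ++ [leval d s]).
Proof. intros Hs; destruct c; simpl; rewrite !(leval_lsubst n) by auto; tauto. Qed.

Lemma Choldsl_csubst n d C s : length s = n ->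
  Choldsl (map (csubst n d) C) s <-> Choldsl C (s ++ [leval d s]).
Proof.
  intros Hs. unfold Choldsl. rewrite Forall_map.
  split; apply Forall_impl; intros c; apply (cholds_csubst n); auto.
Qed.

Lemma in_cube_snoc n s x : in_cube (S n) (s ++ [x]) <-> in_cube n s /\ 0 <= x <= 1.
Proof.
  unfold in_cube. rewrite length_app, Forall_app. simpl.
  split.
  - intros [Hl [H1 H2]]. inversion H2; subst. split; [split|]; auto; lia.
  - intros [[Hl H1] H2]. split; [lia|split; auto].
Qed.

Lemma Choldsl_range n s : length s = n -> Choldsl (range n) s <-> in_cube n s.
Proof.
  intros Hs. unfold Choldsl, range, in_cube. rewrite Forall_flat_map, Forall_nth.
  split.
  - intros H. split; auto. apply Forall_nth. intros i d Hi.
    rewrite nth_indep with (d' := 0) by auto.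
    specialize (H i 0%nat). rewrite length_seq in H. specialize (H ltac:(lia)).
    rewrite seq_nth in H by lia. simpl in H.
    inversion H; subst. inversion H3; subst. simpl in *.
    rewrite leval_lconstant, leval_lvar in *. lra.
  - intros [_ H] i d Hi. rewrite length_seq in Hi. rewrite seq_nth by lia. simpl.
    rewrite Forall_nth in H. specialize (H i 0 ltac:(lia)).
    constructor; [|constructor; [|constructor]]; simpl; rewrite ?leval_lconstant, ?leval_lvar; lra.
Qed.

(** [dle false] is [<=] and [dle true] is [>=]: the direction in which the
    approximations of a [mu]-loop, resp. a [nu]-loop, move. *)
Definition sgn (b : bool) : R := if b then -1 else 1.
Definition dle (b : bool) (x y : R) : Prop := sgn b * x <= sgn b * y.
Definition dlt (b : bool) (x y : R) : Prop := sgn b * x < sgn b * y.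

Ltac by_direction b := unfold dle, dlt, sgn in *; destruct b; lra.

(** * Constraints as bounds on the last variable *)

Definition gap_const n c s := leval (ltrunc n (cgap c)) s.
Definition gap_coef n c := coef n (cgap c).

Definition crel (c : constr) (x y : R) : Prop :=
  match c with CLt _ _ => x < y | CLe _ _ => x <= y end.

Lemma crel_le c x y : crel c x y -> x <= y.
Proof. destruct c; simpl; lra. Qed.

Lemma crel_weaken c x y y' : crel c x y -> y <= y' -> crel c x y'.
Proof. destruct c; simpl; lra. Qed.

Lemma crel_lt c x y : x < y -> crel c x y.
Proof. destruct c; simpl; lra. Qed.

Lemma cholds_snoc n c s x : length s = n ->
  cholds c (s ++ [x]) <-> crel c 0 (gap_const n c s + gap_coef n c * x).
Proof.
  intros Hs. unfold gap_const, gap_coef. rewrite <- (leval_snoc n) by auto.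
  destruct c; simpl; rewrite leval_lsub; lra.
Qed.

Lemma gap_bound n c s x : gap_coef n c <> 0 ->
  gap_const n c s + gap_coef n c * x = gap_coef n c * (x - leval (Defs.bound n c) s).
Proof.
  intros Hg. unfold Defs.bound, gap_const, gap_coef in *. rewrite leval_lscale. field. auto.
Qed.

Lemma cholds_bound b n c s x : length s = n -> sgn b * gap_coef n c < 0 ->
  cholds c (s ++ [x]) -> dle b x (leval (Defs.bound n c) s).
Proof.
  intros Hs Hg H. rewrite (cholds_snoc n) in H by auto. apply crel_le in H.
  rewrite gap_bound in H by (unfold sgn in Hg; destruct b; lra).
  unfold dle, sgn in *; destruct b; nra.
Qed.

Lemma cholds_extend b n c s y x : length s = n -> cholds c (s ++ [y]) -> dle b y x ->
  (sgn b * gap_coef n c < 0 -> dlt b x (leval (Defs.bound n c) s)) ->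
  cholds c (s ++ [x]).
Proof.
  intros Hs Hy Hyx Hb. rewrite (cholds_snoc n) in * by auto.
  destruct (Rlt_dec (sgn b * gap_coef n c) 0) as [Hg|Hg].
  - specialize (Hb Hg). apply crel_lt.
    rewrite gap_bound by (unfold sgn in Hg; destruct b; lra).
    unfold dlt, sgn in *; destruct b; nra.
  - apply (crel_weaken _ _ _ _ Hy). unfold dle, sgn in *; destruct b; nra.
Qed.

Lemma cholds_convex n c s lo hi x : length s = n ->
  cholds c (s ++ [lo]) -> cholds c (s ++ [hi]) -> lo <= x <= hi -> cholds c (s ++ [x]).
Proof.
  intros Hs Hlo Hhi Hx. rewrite (cholds_snoc n) in * by auto.
  destruct (Rle_dec 0 (gap_coef n c)).
  - apply (crel_weaken _ _ _ _ Hlo). nra.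
  - apply (crel_weaken _ _ _ _ Hhi). nra.
Qed.

Lemma Choldsl_extend b n C s y x : length s = n -> Choldsl C (s ++ [y]) -> dle b y x ->
  (forall c, In c C -> sgn b * gap_coef n c < 0 -> dlt b x (leval (Defs.bound n c) s)) ->
  Choldsl C (s ++ [x]).
Proof.
  intros Hs Hy Hyx Hb. apply Forall_forall. intros c Hc.
  apply (cholds_extend b n c s y x); auto. eapply Choldsl_In; eauto.
Qed.

Lemma Choldsl_convex n C s lo hi x : length s = n ->
  Choldsl C (s ++ [lo]) -> Choldsl C (s ++ [hi]) -> lo <= x <= hi -> Choldsl C (s ++ [x]).
Proof.
  intros Hs Hlo Hhi Hx. apply Forall_forall. intros c Hc.
  apply (cholds_convex n c s lo hi); auto; eapply Choldsl_In; eauto.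
Qed.

Definition bounds_ahead (b : bool) n C := if b then lower_bounds n C else upper_bounds n C.

Lemma In_bounds_ahead b n C x : In x (bounds_ahead b n C) <->
  exists c, In c C /\ sgn b * gap_coef n c < 0 /\ x = Defs.bound n c.
Proof.
  unfold bounds_ahead, lower_bounds, upper_bounds, gap_coef.
  assert (Hs : forall g, (if b then 0 < g else g < 0) <-> sgn b * g < 0)
    by (unfold sgn; destruct b; intros; lra).
  destruct b; rewrite in_map_iff; split.
  all: first [ intros [c [<- Hc]]; apply filter_In in Hc as [Hc Hf];
               destruct Rlt_dec; [|discriminate]; exists c; rewrite <- Hs; auto
             | intros [c [Hc [Hg ->]]]; exists c; split; auto; apply filter_In;
               rewrite <- Hs in Hg; destruct Rlt_dec; auto ].
Qed.

(** * Affine maps of one variable *)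

Lemma affine_limit_le a q d u w : d < u ->
  (forall x, d <= x < u -> a + q * x <= w) -> a + q * u <= w.
Proof.
  intros Hdu Hx. apply Rnot_lt_le. intros Hc.
  destruct (Rle_dec q 0) as [Hq|Hq].
  - specialize (Hx d ltac:(lra)). nra.
  - set (eps := a + q * u - w).
    set (x := Rmax d (u - eps / (2 * q))).
    assert (Hpos : 0 < eps / (2 * q)) by (apply Rdiv_lt_0_compat; unfold eps; lra).
    assert (Hx1 : d <= x) by apply Rmax_l.
    assert (Hx2 : x < u) by (unfold x, Rmax; destruct Rle_dec; lra).
    assert (Hx3 : u - eps / (2 * q) <= x) by apply Rmax_r.
    specialize (Hx x ltac:(lra)).
    assert (q * (u - eps / (2 * q)) <= q * x) by (apply Rmult_le_compat_l; lra).
    assert (q * (u - eps / (2 * q)) = q * u - eps / 2) by (field; lra).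
    unfold eps in *. lra.
Qed.

Lemma affine_fixpoint_between a q d u : d < u -> d <= a + q * d -> a + q * u < u ->
  exists x, d <= x < u /\ a + q * x = x.
Proof.
  intros Hdu Hd Hu. set (pd := a + q * d - d). set (pu := a + q * u - u).
  assert (Hlam : 0 <= pd / (pd - pu) < 1).
  { split; [apply Rmult_le_pos; [unfold pd; lra|left; apply Rinv_0_lt_compat; unfold pd, pu; lra]|].
    apply (Rmult_lt_reg_r (pd - pu)); [unfold pd, pu; lra|].
    unfold Rdiv. rewrite Rmult_assoc, Rinv_l by (unfold pd, pu; lra). unfold pu; lra. }
  exists (d + pd / (pd - pu) * (u - d)). split; [split; nra|].
  assert (E : pd / (pd - pu) * (pu - pd) = - pd) by (field; unfold pd, pu; lra).
  unfold pd, pu in *. nra.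
Qed.

Lemma affine_limit_dle b a q d u w : dlt b d u ->
  (forall x, dle b d x -> dlt b x u -> dle b (a + q * x) w) -> dle b (a + q * u) w.
Proof.
  unfold dle, dlt, sgn; destruct b; intros Hdu Hx.
  - assert (- a + q * - u <= - w); [|lra].
    apply (affine_limit_le (- a) q (- d) (- u) (- w)); [lra|].
    intros x Hx'. specialize (Hx (- x) ltac:(lra) ltac:(lra)). lra.
  - assert (a + q * u <= w); [|lra].
    apply (affine_limit_le a q d u w); [lra|].
    intros x Hx'. specialize (Hx x ltac:(lra) ltac:(lra)). lra.
Qed.

Lemma affine_no_fixpoint_dle b a q d u : dlt b d u -> dle b d (a + q * d) ->
  (forall x, dle b d x -> dlt b x u -> a + q * x <> x) -> dle b u (a + q * u).
Proof.
  unfold dle, dlt, sgn; destruct b; intros Hdu Hd Hx; apply Rnot_lt_le; intros Hc.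
  - destruct (affine_fixpoint_between (- a) q (- d) (- u)) as [x [Hx1 Hx2]]; try lra.
    apply (Hx (- x)); lra.
  - destruct (affine_fixpoint_between a q d u) as [x [Hx1 Hx2]]; try lra.
    apply (Hx x); lra.
Qed.

(** * Semantics *)

Lemma sem_det t env u u' : sem t env u -> sem t env u' -> u = u'.
Proof.
  revert env u u'; induction t; intros env u u' H1 H2; simpl in *;
    try congruence;
    try (destruct H1 as [a [Ha ->]]; destruct H2 as [a' [Ha' ->]];
         rewrite (IHt _ _ _ Ha Ha'); reflexivity);
    try (destruct H1 as [a [c [Ha [Hc ->]]]]; destruct H2 as [a' [c' [Ha' [Hc' ->]]]];
         rewrite (IHt1 _ _ _ Ha Ha'), (IHt2 _ _ _ Hc Hc'); reflexivity);
    destruct H1 as [R1 [F1 L1]]; destruct H2 as [R2 [F2 L2]];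
    specialize (L1 u' R2 F2); specialize (L2 u R1 F1); lra.
Qed.

Lemma tarski_lfp (G : R -> R -> Prop) :
  (forall x, 0 <= x <= 1 -> exists y, G x y) ->
  (forall x y, 0 <= x <= 1 -> G x y -> 0 <= y <= 1) ->
  (forall x x' y y', 0 <= x <= 1 -> 0 <= x' <= 1 -> x <= x' -> G x y -> G x' y' -> y <= y') ->
  exists v, 0 <= v <= 1 /\ G v v /\ (forall p y, 0 <= p <= 1 -> G p y -> y <= p -> v <= p).
Proof.
  intros Tot Rng Mon.
  set (P := fun x => 0 <= x <= 1 /\ exists y, G x y /\ y <= x).
  assert (HP1 : P 1).
  { destruct (Tot 1) as [y Hy]; [lra|]. split; [lra|]. exists y; split; auto.
    apply (Rng 1) in Hy; lra. }
  destruct (completeness (fun z => P (- z))) as [m [Hub Hlub]].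
  { exists 0. intros z [Hz _]. lra. }
  { exists (Ropp 1). cbv beta. rewrite Ropp_involutive. exact HP1. }
  set (v := - m).
  assert (Hlow : forall x, P x -> v <= x).
  { intros x Hx. assert (- x <= m) by (apply Hub; rewrite Ropp_involutive; auto).
    unfold v; lra. }
  assert (Hgl : forall l, (forall x, P x -> l <= x) -> l <= v).
  { intros l Hl. assert (m <= - l) by (apply Hlub; intros z Hz; apply Hl in Hz; lra).
    unfold v; lra. }
  assert (Hv : 0 <= v <= 1) by (split; [apply Hgl; intros x [Hx _]; lra|apply Hlow; auto]).
  destruct (Tot v Hv) as [y0 Hy0].
  assert (Hy0v : y0 <= v).
  { apply Hgl. intros x Hx. pose proof (Hlow x Hx) as Hvx.
    destruct Hx as [Hx [y [Hy Hyx]]]. pose proof (Mon v x y0 y Hv Hx Hvx Hy0 Hy). lra. }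
  assert (Hvy0 : v <= y0).
  { apply Hlow. split; [apply (Rng v); auto|].
    destruct (Tot y0) as [y1 Hy1]; [apply (Rng v); auto|].
    exists y1; split; auto. apply (Mon y0 v y1 y0); auto. apply (Rng v); auto. }
  replace y0 with v in Hy0 by lra.
  exists v; split; [lra|split; auto].
  intros p y Hp Hy Hyp. apply Hlow. split; auto. exists y; auto.
Qed.

(** Greatest fixed points are least fixed points of the conjugate by [x |-> 1 - x]. *)
Lemma tarski_gfp (G : R -> R -> Prop) :
  (forall x, 0 <= x <= 1 -> exists y, G x y) ->
  (forall x y, 0 <= x <= 1 -> G x y -> 0 <= y <= 1) ->
  (forall x x' y y', 0 <= x <= 1 -> 0 <= x' <= 1 -> x <= x' -> G x y -> G x' y' -> y <= y') ->
  exists v, 0 <= v <= 1 /\ G v v /\ (forall p y, 0 <= p <= 1 -> G p y -> p <= y -> p <= v).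
Proof.
  intros Tot Rng Mon.
  destruct (tarski_lfp (fun x y => G (1 - x) (1 - y))) as [v [Hv [Hfix Hleast]]].
  - intros x Hx. destruct (Tot (1 - x)) as [y Hy]; [lra|].
    exists (1 - y). replace (1 - (1 - y)) with y by ring. exact Hy.
  - intros x y Hx Hy. apply Rng in Hy; lra.
  - intros x x' y y' Hx Hx' Hxx Hy Hy'.
    pose proof (Mon (1 - x') (1 - x) _ _ ltac:(lra) ltac:(lra) ltac:(lra) Hy' Hy). lra.
  - exists (1 - v). split; [lra|split; auto].
    intros p y Hp Hy Hpy.
    assert (v <= 1 - p); [|lra].
    apply (Hleast (1 - p) (1 - y)); [lra| |lra].
    replace (1 - (1 - p)) with p by ring; replace (1 - (1 - y)) with y by ring. exact Hy.
Qed.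

Lemma tarski_extremal b (G : R -> R -> Prop) :
  (forall x, 0 <= x <= 1 -> exists y, G x y) ->
  (forall x y, 0 <= x <= 1 -> G x y -> 0 <= y <= 1) ->
  (forall x x' y y', 0 <= x <= 1 -> 0 <= x' <= 1 -> x <= x' -> G x y -> G x' y' -> y <= y') ->
  exists v, 0 <= v <= 1 /\ G v v /\
    (forall p y, 0 <= p <= 1 -> G p y -> dle b y p -> dle b v p).
Proof.
  intros Tot Rng Mon. destruct b.
  - destruct (tarski_gfp G Tot Rng Mon) as [v [Hv [Hfix Hp]]].
    exists v; split; [exact Hv|split; [exact Hfix|]]. intros p y Hp01 Hy Hyp. unfold dle, sgn in *.
    specialize (Hp p y Hp01 Hy ltac:(lra)). lra.
  - destruct (tarski_lfp G Tot Rng Mon) as [v [Hv [Hfix Hp]]].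
    exists v; split; [exact Hv|split; [exact Hfix|]]. intros p y Hp01 Hy Hyp. unfold dle, sgn in *.
    specialize (Hp p y Hp01 Hy ltac:(lra)). lra.
Qed.

Definition fixterm (b : bool) (t : term) : term := if b then TNu t else TMu t.

Lemma sem_fixterm b t env v : sem (fixterm b t) env v <->
  0 <= v <= 1 /\ sem t (env ++ [v]) v /\
  (forall w, 0 <= w <= 1 -> sem t (env ++ [w]) w -> dle b v w).
Proof.
  unfold dle, sgn; destruct b; simpl; split; intros [H1 [H2 H3]];
    (split; [exact H1|split; [exact H2|]]);
    intros w Hw Hfw; specialize (H3 w Hw Hfw); lra.
Qed.

Record sem_regular (n : nat) (t : term) : Prop := {
  sem_range : forall env v, in_cube n env -> sem t env v -> 0 <= v <= 1;
  sem_total : forall env, in_cube n env -> exists v, sem t env v;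
  sem_mono : forall e1 e2 v1 v2, in_cube n e1 -> in_cube n e2 -> Forall2 Rle e1 e2 ->
    sem t e1 v1 -> sem t e2 v2 -> v1 <= v2 }.

Lemma Forall2_Rle_refl (e : list R) : Forall2 Rle e e.
Proof. induction e; constructor; auto; lra. Qed.

Lemma Forall2_Rle_nth (e1 e2 : list R) : Forall2 Rle e1 e2 -> forall i, nth i e1 0 <= nth i e2 0.
Proof. induction 1; intros [|i]; simpl; auto; lra. Qed.

Lemma sem_mono_snoc n t s x x' u u' : sem_regular (S n) t -> in_cube n s ->
  0 <= x <= 1 -> 0 <= x' <= 1 -> x <= x' ->
  sem t (s ++ [x]) u -> sem t (s ++ [x']) u' -> u <= u'.
Proof.
  intros Reg Hs Hx Hx' Hxx'. apply (sem_mono _ _ Reg); try (apply in_cube_snoc; auto).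
  apply Forall2_app; [apply Forall2_Rle_refl|constructor; auto].
Qed.

Lemma fix_extremal b n t env : sem_regular (S n) t -> in_cube n env ->
  exists v, sem (fixterm b t) env v /\
    (forall p y, 0 <= p <= 1 -> sem t (env ++ [p]) y -> dle b y p -> dle b v p).
Proof.
  intros Reg He.
  destruct (tarski_extremal b (fun x y => sem t (env ++ [x]) y)) as [v [Hv [Hfix Hp]]].
  - intros x Hx. apply (sem_total _ _ Reg). apply in_cube_snoc; auto.
  - intros x y Hx Hy. apply (sem_range _ _ Reg _ _ (proj2 (in_cube_snoc _ _ _) (conj He Hx)) Hy).
  - intros x x' y y' Hx Hx' Hxx Hy Hy'. apply (sem_mono_snoc n t env x x' y y'); auto.
  - exists v. split; auto. apply sem_fixterm. split; [exact Hv|split; [exact Hfix|]].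
    intros w Hw Hfw. apply (Hp w w); auto. unfold dle; lra.
Qed.

Lemma fix_extremal_sem b n t env v p y : sem_regular (S n) t -> in_cube n env ->
  sem (fixterm b t) env v -> 0 <= p <= 1 -> sem t (env ++ [p]) y -> dle b y p -> dle b v p.
Proof.
  intros Reg He Hv. destruct (fix_extremal b n t env Reg He) as [v' [Hv' Hp]].
  rewrite (sem_det _ _ _ _ Hv Hv'). eapply Hp; eauto.
Qed.

Lemma sem_regular_fix b n t : sem_regular (S n) t -> sem_regular n (fixterm b t).
Proof.
  intros Reg. split.
  - intros env v _ Hv. apply sem_fixterm in Hv. apply Hv.
  - intros env He. destruct (fix_extremal b n t env Reg He) as [v [Hv _]]. eauto.
  - intros e1 e2 v1 v2 H1 H2 H12 Hv1 Hv2.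
    pose proof (proj1 (sem_fixterm _ _ _ _) Hv1) as [R1 [F1 _]].
    pose proof (proj1 (sem_fixterm _ _ _ _) Hv2) as [R2 [F2 _]].
    assert (Hshift : forall x, Forall2 Rle (e1 ++ [x]) (e2 ++ [x]))
      by (intros; apply Forall2_app; [exact H12|constructor; [lra|constructor]]).
    destruct b.
    + destruct (sem_total _ _ Reg (e2 ++ [v1])) as [y Hy]; [apply in_cube_snoc; auto|].
      pose proof (sem_mono _ _ Reg _ _ _ _ (proj2 (in_cube_snoc _ _ _) (conj H1 R1))
        (proj2 (in_cube_snoc _ _ _) (conj H2 R1)) (Hshift v1) F1 Hy).
      pose proof (fix_extremal_sem true n t e2 v2 v1 y Reg H2 Hv2 R1 Hy).
      unfold dle, sgn in *. lra.
    + destruct (sem_total _ _ Reg (e1 ++ [v2])) as [y Hy]; [apply in_cube_snoc; auto|].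
      pose proof (sem_mono _ _ Reg _ _ _ _ (proj2 (in_cube_snoc _ _ _) (conj H1 R2))
        (proj2 (in_cube_snoc _ _ _) (conj H2 R2)) (Hshift v2) Hy F2).
      pose proof (fix_extremal_sem false n t e1 v1 v2 y Reg H1 Hv1 R2 Hy).
      unfold dle, sgn in *. lra.
Qed.

Lemma sem_regular_bin n a c T (op : R -> R -> R) :
  sem_regular n a -> sem_regular n c ->
  (forall env v, sem T env v <-> exists u w, sem a env u /\ sem c env w /\ v = op u w) ->
  (forall u w, 0 <= u <= 1 -> 0 <= w <= 1 -> 0 <= op u w <= 1) ->
  (forall u w u' w', u <= u' -> w <= w' -> op u w <= op u' w') ->
  sem_regular n T.
Proof.
  intros Ra Rc HT Hrange Hmono. split.
  - intros env v He Hv. apply HT in Hv as [u [w [Hu [Hw ->]]]].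
    apply Hrange; [apply (sem_range _ _ Ra env)|apply (sem_range _ _ Rc env)]; auto.
  - intros env He. destruct (sem_total _ _ Ra env He) as [u Hu].
    destruct (sem_total _ _ Rc env He) as [w Hw]. exists (op u w). apply HT; eauto.
  - intros e1 e2 v1 v2 H1 H2 H12 Hv1 Hv2.
    apply HT in Hv1 as [u [w [Hu [Hw ->]]]]. apply HT in Hv2 as [u' [w' [Hu' [Hw' ->]]]].
    apply Hmono; [apply (sem_mono _ _ Ra e1 e2)|apply (sem_mono _ _ Rc e1 e2)]; auto.
Qed.

Ltac minmax_lra := intros; unfold Rmax, Rmin; repeat destruct Rle_dec; lra.

Lemma sem_regular_wf t : forall n, wf n t -> sem_regular n t.
Proof.
  induction t as [i| | |c t IHt|t1 IHt1 t2 IHt2|t1 IHt1 t2 IHt2|t1 IHt1 t2 IHt2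
                 |t1 IHt1 t2 IHt2|t IHt|t IHt]; intros m Hw; simpl in Hw.
  - split; simpl.
    + intros env v [Hl Hf] ->. rewrite Forall_nth in Hf. apply Hf. lia.
    + eauto.
    + intros e1 e2 v1 v2 _ _ H -> ->. apply Forall2_Rle_nth; auto.
  - split; simpl; [intros; lra|eauto|intros; lra].
  - split; simpl; [intros; lra|eauto|intros; lra].
  - destruct Hw as [Hc Hw]. pose proof (IHt m Hw) as Reg. split; simpl.
    + intros env v He [u [Hu ->]]. apply (sem_range _ _ Reg) in Hu; auto. nra.
    + intros env He. destruct (sem_total _ _ Reg env He) as [u Hu]. eauto.
    + intros e1 e2 v1 v2 H1 H2 H12 [u1 [Hu1 ->]] [u2 [Hu2 ->]].
      pose proof (sem_mono _ _ Reg _ _ _ _ H1 H2 H12 Hu1 Hu2). nra.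
  - apply (sem_regular_bin m t1 t2 _ Rmax (IHt1 m (proj1 Hw)) (IHt2 m (proj2 Hw)));
      [intros; reflexivity|minmax_lra|minmax_lra].
  - apply (sem_regular_bin m t1 t2 _ Rmin (IHt1 m (proj1 Hw)) (IHt2 m (proj2 Hw)));
      [intros; reflexivity|minmax_lra|minmax_lra].
  - apply (sem_regular_bin m t1 t2 _ (fun u w => Rmin (u + w) 1)
             (IHt1 m (proj1 Hw)) (IHt2 m (proj2 Hw)));
      [intros; reflexivity|minmax_lra|minmax_lra].
  - apply (sem_regular_bin m t1 t2 _ (fun u w => Rmax (u + w - 1) 0)
             (IHt1 m (proj1 Hw)) (IHt2 m (proj2 Hw)));
      [intros; reflexivity|minmax_lra|minmax_lra].
  - exact (sem_regular_fix false m t (IHt (S m) Hw)).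
  - exact (sem_regular_fix true m t (IHt (S m) Hw)).
Qed.

Section Algorithm.
Variable pf : list constr -> list R -> constr.
Variable pmin : list linexp -> list R -> linexp.
Variable pmax : list linexp -> list R -> linexp.

Hypothesis Hpf : pick_false_spec pf.
Hypothesis Hpmin : pick_min_spec pmin.
Hypothesis Hpmax : pick_max_spec pmax.

Local Notation alg := (Defs.alg pf pmin pmax).

Definition pick_bound (b : bool) (bs : list linexp) (r : list R) : linexp :=
  if b then pmax bs r else pmin bs r.

Definition bound_constraints (b : bool) (bs : list linexp) (bj : linexp) : list constr :=
  map (fun x => if b then CLe x bj else CLe bj x) bs.

Definition loop_body (rec : list constr -> linexp -> option result)
  (A : list R -> option result) (n : nat) (r : list R) (b : bool)
  (D : list constr) (d : linexp) : option result :=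
  match A (r ++ [leval d r]) with
  | None => None
  | Some (C, e) =>
    let next (N : constr) : option result :=
      let bs := bounds_ahead b n C in
      match bs with
      | [] => None
      | _ =>
        let bj := pick_bound b bs r in
        rec (D ++ map (csubst n d) C ++ [N] ++ bound_constraints b bs bj) (lsubst n e bj)
      end in
    if Req_EM_T (coef n e) 1 then
      if Req_EM_T (leval (ltrunc n e) r) 0 then
        Some (D ++ map (csubst n d) C ++
              [CLe (ltrunc n e) (lconstant 0); CLe (lconstant 0) (ltrunc n e)], d)
      else if Rlt_dec (leval (ltrunc n e) r) 0 then next (CLt (ltrunc n e) (lconstant 0))
      else next (CLt (lconstant 0) (ltrunc n e))
    else
      let f := lscale (/ (1 - coef n e)) (ltrunc n e) in
      if Choldslb C (r ++ [leval f r]) then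
        Some (D ++ map (csubst n d) C ++ map (csubst n f) C, f)
      else next (cneg (csubst n f (pf C (r ++ [leval f r]))))
  end.

Section Loop.
Variable A : list R -> option result.
Variables (n : nat) (r : list R) (b : bool).

(** A section is used so that [A n r b] are uniform parameters, which makes
    [loop] convertible with the inner fixpoint of [alg]. *)
Fixpoint loop (j : nat) (D : list constr) (d : linexp) : option result :=
  match j with
  | O => None
  | S j' => loop_body (loop j') A n r b D d
  end.
End Loop.

Lemma alg_fixterm b k n t r :
  alg (S k) n (fixterm b t) r =
  loop (alg k (S n) t) n r b k [] (lconstant (if b then 1 else 0)).
Proof. destruct b; exact eq_refl. Qed.

Lemma loop_body_mono rec1 rec2 (A1 A2 : list R -> option result) n r b D d res :
  (forall D d res, rec1 D d = Some res -> rec2 D d = Some res) ->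
  (forall x res, A1 x = Some res -> A2 x = Some res) ->
  loop_body rec1 A1 n r b D d = Some res -> loop_body rec2 A2 n r b D d = Some res.
Proof.
  intros Hrec HA. unfold loop_body.
  destruct (A1 _) as [[C e]|] eqn:E; [|discriminate]. rewrite (HA _ _ E).
  cbv zeta. destruct (bounds_ahead b n C); destruct (Req_EM_T _ _);
    try destruct (Req_EM_T _ _); try destruct (Rlt_dec _ _); try destruct (Choldslb _ _); auto.
Qed.

Lemma loop_mono (A1 A2 : list R -> option result) n r b :
  (forall x res, A1 x = Some res -> A2 x = Some res) ->
  forall j D d res, loop A1 n r b j D d = Some res -> loop A2 n r b (S j) D d = Some res.
Proof.
  intros HA j; induction j as [|j IH]; intros D d res H; [discriminate|].
  exact (loop_body_mono _ _ _ _ n r b D d res IH HA H).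
Qed.

Lemma alg_mono fuel : forall n t r res,
  alg fuel n t r = Some res -> alg (S fuel) n t r = Some res.
Proof.
  induction fuel as [|k IH]; intros n t r res H; [discriminate|].
  destruct t as [i| | |c t|a c|a c|a c|a c|t|t].
  all: try exact H.
  all: try (change (TMu t) with (fixterm false t) in H |- *);
       try (change (TNu t) with (fixterm true t) in H |- *);
       try (rewrite alg_fixterm in H |- *;
            exact (loop_mono _ _ n r _ (fun x => IH (S n) t x) _ _ _ _ H)).
  (* [S k] is made opaque so that [cbn] unfolds [alg] only once in the goal. *)
  all: cbn [Defs.alg] in H; remember (S k) as k'; cbn [Defs.alg];
    repeat match type of H with context [alg ?k0 ?m ?u ?x] =>
      let E := fresh "E" in
      destruct (alg k0 m u x) as [[? ?]|] eqn:E; [|discriminate];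
      rewrite (IH _ _ _ _ E)
    end; exact H.
Qed.

Lemma alg_mono_le f1 f2 n t r res : (f1 <= f2)%nat ->
  alg f1 n t r = Some res -> alg f2 n t r = Some res.
Proof. induction 1; auto using alg_mono. Qed.

Lemma alg_det f1 f2 n t r res1 res2 :
  alg f1 n t r = Some res1 -> alg f2 n t r = Some res2 -> res1 = res2.
Proof.
  intros H1 H2. apply (alg_mono_le f1 (Nat.max f1 f2)) in H1; [|lia].
  apply (alg_mono_le f2 (Nat.max f1 f2)) in H2; [|lia]. congruence.
Qed.

(** The paper's [f]: the fixed point of [x_(n+1) |-> e] when [coef n e <> 1]. *)
Definition fixpoint_expr n e := lscale (/ (1 - coef n e)) (ltrunc n e).

Lemma leval_fixpoint_expr n e s : length s = n -> coef n e <> 1 ->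
  leval e (s ++ [leval (fixpoint_expr n e) s]) = leval (fixpoint_expr n e) s.
Proof.
  intros Hs Hq. unfold fixpoint_expr. rewrite (leval_snoc n), leval_lscale by auto.
  field. intro. apply Hq; lra.
Qed.

Lemma fixpoint_expr_unique n e s w : length s = n -> coef n e <> 1 ->
  leval e (s ++ [w]) = w -> w = leval (fixpoint_expr n e) s.
Proof.
  intros Hs Hq. unfold fixpoint_expr. rewrite (leval_snoc n), leval_lscale by auto. intros E.
  assert (Hq' : 1 - coef n e <> 0) by (intro; apply Hq; lra).
  apply (Rmult_eq_reg_l (1 - coef n e)); [|exact Hq'].
  rewrite <- Rmult_assoc, Rinv_r, Rmult_1_l by exact Hq'. lra.
Qed.

Definition exit_result n r C e D d (res : result) :=
  (coef n e = 1 /\ leval (ltrunc n e) r = 0 /\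
     res = (D ++ map (csubst n d) C ++
            [CLe (ltrunc n e) (lconstant 0); CLe (lconstant 0) (ltrunc n e)], d)) \/
  (coef n e <> 1 /\ Choldsl C (r ++ [leval (fixpoint_expr n e) r]) /\
     res = (D ++ map (csubst n d) C ++ map (csubst n (fixpoint_expr n e)) C, fixpoint_expr n e)).

Definition rejection n r C e N :=
  (coef n e = 1 /\
     ((leval (ltrunc n e) r < 0 /\ N = CLt (ltrunc n e) (lconstant 0)) \/
      (0 < leval (ltrunc n e) r /\ N = CLt (lconstant 0) (ltrunc n e)))) \/
  (coef n e <> 1 /\ ~ Choldsl C (r ++ [leval (fixpoint_expr n e) r]) /\
     N = cneg (csubst n (fixpoint_expr n e) (pf C (r ++ [leval (fixpoint_expr n e) r])))).

Definition rejection_candidates n C e : list constr :=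
  [CLt (ltrunc n e) (lconstant 0); CLt (lconstant 0) (ltrunc n e)] ++
  map (fun c => cneg (csubst n (fixpoint_expr n e) c)) C.

Definition next_constraints b n r D d C N : list constr :=
  D ++ map (csubst n d) C ++ [N] ++
  bound_constraints b (bounds_ahead b n C) (pick_bound b (bounds_ahead b n C) r).

Definition next_approx b n r C e : linexp := lsubst n e (pick_bound b (bounds_ahead b n C) r).

Lemma loop_body_none rec A n r b D d :
  A (r ++ [leval d r]) = None -> loop_body rec A n r b D d = None.
Proof. intros H; unfold loop_body; rewrite H; reflexivity. Qed.

Lemma loop_body_cases rec A n r b D d C e :
  A (r ++ [leval d r]) = Some (C, e) -> bounds_ahead b n C <> [] ->
  (exists res, loop_body rec A n r b D d = Some res /\ exit_result n r C e D d res) \/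
  (exists N, rejection n r C e N /\
     loop_body rec A n r b D d = rec (next_constraints b n r D d C N) (next_approx b n r C e)).
Proof.
  intros HA Hb.
  unfold loop_body, next_constraints, next_approx, rejection, exit_result, fixpoint_expr.
  rewrite HA. cbv zeta.
  destruct (bounds_ahead b n C) as [|b0 bs]; [congruence|].
  destruct (Req_EM_T (coef n e) 1) as [Hq|Hq]; [destruct (Req_EM_T (leval (ltrunc n e) r) 0)|].
  - left. eexists; split; [reflexivity|]. left; auto.
  - right. destruct (Rlt_dec (leval (ltrunc n e) r) 0).
    + eexists; split; [left; split; [auto|left; split; [auto|reflexivity]]|reflexivity].
    + eexists; split; [left; split; [auto|right; split; [lra|reflexivity]]|reflexivity].
  - destruct (Choldslb C _) eqn:EC.
    + left. eexists; split; [reflexivity|]. right. split; [auto|split; [|reflexivity]].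
      apply Choldslb_spec; auto.
    + right. eexists; split; [right; split; [auto|split; [|reflexivity]]|reflexivity].
      rewrite <- Choldslb_spec, EC. discriminate.
Qed.

Lemma rejection_not_exit n r C e N D d res :
  rejection n r C e N -> exit_result n r C e D d res -> False.
Proof. unfold rejection, exit_result; intuition (try lra; try congruence). Qed.

Lemma rejection_unique n r C e N N' : rejection n r C e N -> rejection n r C e N' -> N = N'.
Proof. unfold rejection; intuition (try lra; try congruence). Qed.

Lemma bound_constraints_holds b bs bj s : Choldsl (bound_constraints b bs bj) s <->
  forall x, In x bs -> dle b (leval bj s) (leval x s).
Proof.
  unfold Choldsl, bound_constraints. rewrite Forall_map, Forall_forall.
  split; intros H x Hx; specialize (H x Hx); unfold dle, sgn in *; destruct b; simpl in *; lra.
Qed.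

Lemma pick_bound_spec b bs s : bs <> [] ->
  In (pick_bound b bs s) bs /\ forall x, In x bs -> dle b (leval (pick_bound b bs s) s) (leval x s).
Proof.
  intros Hne. unfold pick_bound, dle, sgn. destruct b.
  - destruct (Hpmax bs s Hne) as [Hin Hmax]. split; auto. intros x Hx. specialize (Hmax x Hx). lra.
  - destruct (Hpmin bs s Hne) as [Hin Hmin]. split; auto. intros x Hx. specialize (Hmin x Hx). lra.
Qed.

Lemma pf_violated C s : ~ Choldsl C s -> In (pf C s) C /\ ~ cholds (pf C s) s.
Proof. intros H. apply Hpf, not_Choldsl, H. Qed.

Lemma rejection_holds n r C e N : length r = n -> rejection n r C e N -> cholds N r.
Proof.
  intros Hr [[Hq [[Hh ->]|[Hh ->]]]|[Hq [Hnc ->]]]; simpl; rewrite ?leval_lconstant; auto.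
  apply cholds_cneg. rewrite (cholds_csubst n) by auto. apply (pf_violated _ _ Hnc).
Qed.

Lemma rejection_no_fixpoint n r C e N s w : length s = n -> rejection n r C e N ->
  cholds N s -> Choldsl C (s ++ [w]) -> leval e (s ++ [w]) <> w.
Proof.
  intros Hs HN HNs HC HE. rewrite (leval_snoc n) in HE by auto.
  destruct HN as [[Hq [[Hh ->]|[Hh ->]]]|[Hq [Hnc ->]]]; simpl in HNs;
    rewrite ?leval_lconstant in HNs; try (rewrite Hq in HE; lra).
  apply cholds_cneg in HNs. rewrite (cholds_csubst n) in HNs by auto. apply HNs.
  rewrite <- (fixpoint_expr_unique n e s w); [|auto|auto|rewrite (leval_snoc n); auto].
  apply (Choldsl_In _ _ _ HC), (pf_violated _ _ Hnc).
Qed.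

Lemma rejection_in_candidates n r C e N :
  rejection n r C e N -> In N (rejection_candidates n C e).
Proof.
  intros [[Hq [[Hh ->]|[Hh ->]]]|[Hq [Hnc ->]]]; [left; auto|right; left; auto|].
  right; right. apply (in_map (fun c => cneg (csubst n (fixpoint_expr n e) c))).
  apply (pf_violated _ _ Hnc).
Qed.

Definition valid_on n t C e :=
  forall s, length s = n -> Choldsl C s -> in_cube n s /\ sem t s (leval e s).

Definition sound_result n t r (res : result) :=
  Choldsl (fst res) r /\ valid_on n t (fst res) (snd res).

Definition alg_correct n t :=
  forall r fuel res, in_cube n r -> alg fuel n t r = Some res -> sound_result n t r res.
Definition alg_terminates n t :=
  forall r, in_cube n r -> exists fuel res, alg fuel n t r = Some res.
Definition alg_finite n t :=
  exists L, forall r fuel res, in_cube n r -> alg fuel n t r = Some res -> In res L.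
Definition alg_good n t := alg_terminates n t /\ alg_correct n t /\ alg_finite n t.

Lemma good_atom n t e :
  (forall k r, alg (S k) n t r = Some (range n, e)) ->
  (forall s, in_cube n s -> sem t s (leval e s)) -> alg_good n t.
Proof.
  intros Ha Hs. split; [|split].
  - intros r Hr. exists 1%nat, (range n, e). apply Ha.
  - intros r [|k] res Hr H; [discriminate|]. rewrite Ha in H. injection H as <-. split.
    + apply Choldsl_range; [apply Hr|auto].
    + intros s Hl Hc. apply (Choldsl_range n s Hl) in Hc. split; auto.
  - exists [(range n, e)]. intros r [|k] res Hr H; [discriminate|].
    rewrite Ha in H. injection H as <-. left; auto.
Qed.

Lemma good_scale n c t : alg_good n t -> alg_good n (TScale c t).
Proof.
  intros [T [Co [L HL]]]. split; [|split].
  - intros r Hr. destruct (T r Hr) as [f [[C1 e1] H]].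
    exists (S f), (C1, lscale c e1). simpl. rewrite H. reflexivity.
  - intros r [|k] res Hr H; [discriminate|]. simpl in H.
    destruct (alg k n t r) as [[C1 e1]|] eqn:E; [|discriminate]. injection H as <-.
    destruct (Co r k (C1, e1) Hr E) as [H1 H2]. split; auto.
    intros s Hl Hs. destruct (H2 s Hl Hs) as [Hcu Hsem]. split; auto.
    exists (leval e1 s). split; auto. apply leval_lscale.
  - exists (map (fun p => (fst p, lscale c (snd p))) L). intros r [|k] res Hr H; [discriminate|].
    simpl in H. destruct (alg k n t r) as [[C1 e1]|] eqn:E; [|discriminate]. injection H as <-.
    apply in_map_iff. exists (C1, e1). split; auto. eapply HL; eauto.
Qed.

Definition combine (o1 o2 : option result)
  (f : list constr -> linexp -> list constr -> linexp -> result) : option result :=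
  match o1, o2 with Some (C1, e1), Some (C2, e2) => Some (f C1 e1 C2 e2) | _, _ => None end.

(** [branches e1 e2] lists the two (constraint, expression) pairs the algorithm can
    choose between for a binary connective with operand values [e1], [e2]. *)
Lemma good_bin n a c t f (branches : linexp -> linexp -> list (constr * linexp))
  (op : R -> R -> R) :
  alg_good n a -> alg_good n c ->
  (forall k r, alg (S k) n t r = combine (alg k n a r) (alg k n c r) (f r)) ->
  (forall r C1 e1 C2 e2, exists k e, f r C1 e1 C2 e2 = (C1 ++ C2 ++ [k], e) /\
     cholds k r /\ In (k, e) (branches e1 e2) /\
     (forall s, cholds k s -> leval e s = op (leval e1 s) (leval e2 s))) ->
  (forall s u w, sem a s u -> sem c s w -> sem t s (op u w)) ->
  alg_good n t.
Proof.
  intros [Ta [Ca [La HLa]]] [Tc [Cc [Lc HLc]]] Ha HF Hsem. split; [|split].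
  - intros r Hr. destruct (Ta r Hr) as [f1 [[C1 e1] H1]]. destruct (Tc r Hr) as [f2 [[C2 e2] H2]].
    apply (alg_mono_le f1 (Nat.max f1 f2)) in H1; [|lia].
    apply (alg_mono_le f2 (Nat.max f1 f2)) in H2; [|lia].
    exists (S (Nat.max f1 f2)). rewrite Ha. unfold combine. rewrite H1, H2. eauto.
  - intros r [|fuel] res Hr H; [discriminate|]. rewrite Ha in H. unfold combine in H.
    destruct (alg fuel n a r) as [[C1 e1]|] eqn:E1; [|discriminate].
    destruct (alg fuel n c r) as [[C2 e2]|] eqn:E2; [|discriminate]. injection H as <-.
    destruct (HF r C1 e1 C2 e2) as [k [e [-> [Hkr [_ He]]]]].
    destruct (Ca r fuel _ Hr E1) as [Ha1 Ha2]; destruct (Cc r fuel _ Hr E2) as [Hc1 Hc2].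
    split; simpl in *.
    + repeat (apply Choldsl_app; split); auto. repeat constructor; auto.
    + intros s Hl Hs. apply Choldsl_app in Hs as [Hs1 Hs]. apply Choldsl_app in Hs as [Hs2 Hs3].
      destruct (Ha2 s Hl Hs1) as [Hcube Hsa]. destruct (Hc2 s Hl Hs2) as [_ Hsc].
      split; auto. rewrite He by (apply (Choldsl_In _ _ _ Hs3); left; auto). auto.
  - exists (flat_map (fun p1 => flat_map (fun p2 =>
      map (fun q => (fst p1 ++ fst p2 ++ [fst q], snd q)) (branches (snd p1) (snd p2))) Lc) La).
    intros r [|fuel] res Hr H; [discriminate|]. rewrite Ha in H. unfold combine in H.
    destruct (alg fuel n a r) as [[C1 e1]|] eqn:E1; [|discriminate].
    destruct (alg fuel n c r) as [[C2 e2]|] eqn:E2; [|discriminate]. injection H as <-.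
    destruct (HF r C1 e1 C2 e2) as [k [e [-> [_ [Hin _]]]]].
    apply in_flat_map. exists (C1, e1). split; [eapply HLa; eauto|].
    apply in_flat_map. exists (C2, e2). split; [eapply HLc; eauto|].
    apply (in_map (fun q => (C1 ++ C2 ++ [fst q], snd q)) _ _ Hin).
Qed.

Ltac solve_branch :=
  do 2 eexists; split; [reflexivity|];
  split; [simpl; rewrite ?leval_lconstant, ?leval_ladd in *; lra|];
  split; [simpl; auto|];
  intros s Hs; simpl in Hs; rewrite ?leval_lsub, ?leval_lconstant, ?leval_ladd in *;
  unfold Rmax, Rmin; destruct Rle_dec; lra.

Lemma good_join n a c : alg_good n a -> alg_good n c -> alg_good n (TJoin a c).
Proof.
  (* The combination function [f] of [good_bin] is read off [alg] by [reflexivity]. *)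
  intros Ga Gc. eapply (good_bin n a c _ _ (fun e1 e2 => [(CLe e1 e2, e2); (CLe e2 e1, e1)]) Rmax);
    [exact Ga|exact Gc|intros; reflexivity| |intros; simpl; eauto 6].
  intros r C1 e1 C2 e2. cbv beta. destruct Rle_dec; solve_branch.
Qed.

Lemma good_meet n a c : alg_good n a -> alg_good n c -> alg_good n (TMeet a c).
Proof.
  intros Ga Gc. eapply (good_bin n a c _ _ (fun e1 e2 => [(CLe e1 e2, e1); (CLe e2 e1, e2)]) Rmin);
    [exact Ga|exact Gc|intros; reflexivity| |intros; simpl; eauto 6].
  intros r C1 e1 C2 e2. cbv beta. destruct Rle_dec; solve_branch.
Qed.

Lemma good_oplus n a c : alg_good n a -> alg_good n c -> alg_good n (TOplus a c).
Proof.
  intros Ga Gc. eapply (good_bin n a c _ _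
    (fun e1 e2 => [(CLe (ladd e1 e2) (lconstant 1), ladd e1 e2);
                   (CLe (lconstant 1) (ladd e1 e2), lconstant 1)])
    (fun u w => Rmin (u + w) 1));
    [exact Ga|exact Gc|intros; reflexivity| |intros; simpl; eauto 6].
  intros r C1 e1 C2 e2. cbv beta. destruct Rle_dec; solve_branch.
Qed.

Lemma good_odot n a c : alg_good n a -> alg_good n c -> alg_good n (TOdot a c).
Proof.
  intros Ga Gc. eapply (good_bin n a c _ _
    (fun e1 e2 => [(CLe (lconstant 1) (ladd e1 e2), lsub (ladd e1 e2) (lconstant 1));
                   (CLe (ladd e1 e2) (lconstant 1), lconstant 0)])
    (fun u w => Rmax (u + w - 1) 0));
    [exact Ga|exact Gc|intros; reflexivity| |intros; simpl; eauto 6].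
  intros r C1 e1 C2 e2. cbv beta. destruct Rle_dec; solve_branch.
Qed.

(** * The fixed-point loop *)

Definition result_eq_dec (x y : result) : {x = y} + {x <> y} :=
  excluded_middle_informative (x = y).

Lemma exit_result_unique n r C e D d res res' :
  exit_result n r C e D d res -> exit_result n r C e D d res' -> res = res'.
Proof. unfold exit_result; intuition (try lra; try congruence). Qed.

(** All results the loop can return within [m] rounds when every call on the body
    returns an element of [Lp]; it does not depend on the input point. *)
Fixpoint loop_results b n (Lp : list result) (m : nat) (D : list constr) (d : linexp)
  : list result :=
  match m with
  | O => []
  | S m' =>
    flat_map (fun rho : result => let (C, e) := rho in
      [(D ++ map (csubst n d) C ++
          [CLe (ltrunc n e) (lconstant 0); CLe (lconstant 0) (ltrunc n e)], d);
       (D ++ map (csubst n d) C ++ map (csubst n (fixpoint_expr n e)) C, fixpoint_expr n e)] ++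
      flat_map (fun N => flat_map (fun bj =>
          loop_results b n Lp m'
            (D ++ map (csubst n d) C ++ [N] ++ bound_constraints b (bounds_ahead b n C) bj)
            (lsubst n e bj)) (bounds_ahead b n C)) (rejection_candidates n C e)) Lp
  end.

Lemma exit_in_loop_results b n Lp m r C e D d res : In (C, e) Lp ->
  exit_result n r C e D d res -> In res (loop_results b n Lp (S m) D d).
Proof.
  intros HC Hx. apply in_flat_map. exists (C, e). split; auto.
  apply in_app_iff; left. destruct Hx as [[_ [_ ->]]|[_ [_ ->]]]; simpl; auto.
Qed.

Lemma next_in_loop_results b n Lp m r C e D d N res : In (C, e) Lp ->
  rejection n r C e N -> bounds_ahead b n C <> [] ->
  In res (loop_results b n Lp m (next_constraints b n r D d C N) (next_approx b n r C e)) ->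
  In res (loop_results b n Lp (S m) D d).
Proof.
  intros HC HN Hne H. apply in_flat_map. exists (C, e). split; auto.
  apply in_app_iff; right.
  apply in_flat_map. exists N; split; [eapply rejection_in_candidates; eauto|].
  apply in_flat_map. exists (pick_bound b (bounds_ahead b n C) r).
  split; [apply pick_bound_spec; auto|exact H].
Qed.

Section FixLoop.
Variables (n : nat) (t1 : term) (b : bool) (r : list R).
Hypothesis Hreg1 : sem_regular (S n) t1.
Hypothesis Hr : in_cube n r.

Lemma length_r : length r = n.
Proof. apply Hr. Qed.

Definition starts_before D d := forall s, in_cube n s -> Choldsl D s ->
  forall w, 0 <= w <= 1 -> sem t1 (s ++ [w]) w -> dle b (leval d s) w.

Definition loop_invariant D d := Choldsl D r /\ 0 <= leval d r <= 1 /\ starts_before D d.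

Lemma in_cube_approx D d : loop_invariant D d -> in_cube (S n) (r ++ [leval d r]).
Proof. intros Hinv. apply in_cube_snoc; split; [exact Hr|apply Hinv]. Qed.

Lemma valid_snoc C e s x : valid_on (S n) t1 C e -> length s = n -> Choldsl C (s ++ [x]) ->
  in_cube n s /\ 0 <= x <= 1 /\ sem t1 (s ++ [x]) (leval e (s ++ [x])).
Proof.
  intros Hval Hs HC. destruct (Hval (s ++ [x])) as [Hc Hsem]; auto.
  - rewrite length_app; simpl; lia.
  - apply in_cube_snoc in Hc as [H1 H2]. auto.
Qed.

(** Otherwise the region [C] would contain points outside [[0,1]]. *)
Lemma bounds_ahead_nonempty C e y : valid_on (S n) t1 C e -> Choldsl C (r ++ [y]) ->
  0 <= y <= 1 -> bounds_ahead b n C <> [].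
Proof.
  intros Hval HC Hy Hnil. set (z := if b then -1 else 2).
  assert (HCz : Choldsl C (r ++ [z])).
  { apply (Choldsl_extend b n C r y z length_r HC); [unfold z; by_direction b|].
    intros c Hc Hg. exfalso.
    assert (Hin : In (Defs.bound n c) (bounds_ahead b n C)) by (apply In_bounds_ahead; eauto).
    rewrite Hnil in Hin; destruct Hin. }
  destruct (valid_snoc C e r z Hval length_r HCz) as [_ [Hz _]]. unfold z in Hz; destruct b; lra.
Qed.

Section Step.
Variables (D : list constr) (d : linexp) (C : list constr) (e : linexp) (N : constr).
Hypothesis Hinv : loop_invariant D d.
Hypothesis Hval : valid_on (S n) t1 C e.
Hypothesis HCd : Choldsl C (r ++ [leval d r]).
Hypothesis HN : rejection n r C e N.

Local Notation bs := (bounds_ahead b n C).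
Local Notation bj := (pick_bound b (bounds_ahead b n C) r).

Lemma pick_bound_ahead :
  In bj bs /\ forall x, In x bs -> dle b (leval bj r) (leval x r).
Proof.
  apply pick_bound_spec, (bounds_ahead_nonempty C e (leval d r) Hval HCd), Hinv.
Qed.

Lemma region_ahead s : length s = n -> Choldsl C (s ++ [leval d s]) ->
  (forall x, In x bs -> dle b (leval bj s) (leval x s)) ->
  forall x, dle b (leval d s) x -> dlt b x (leval bj s) -> Choldsl C (s ++ [x]).
Proof.
  intros Hs HC Hnear x Hdx Hxb. apply (Choldsl_extend b n C s (leval d s) x Hs HC Hdx).
  intros c Hc Hg.
  assert (Hin : In (Defs.bound n c) bs) by (apply In_bounds_ahead; eauto).
  specialize (Hnear _ Hin). by_direction b.
Qed.

Lemma region_before_pick s x : length s = n -> Choldsl C (s ++ [x]) -> dle b x (leval bj s).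
Proof.
  destruct (proj1 (In_bounds_ahead _ _ _ _) (proj1 pick_bound_ahead)) as [c [Hc [Hg ->]]].
  intros Hs HCx. apply (cholds_bound b n c s x Hs Hg). eapply Choldsl_In; eauto.
Qed.

Lemma step_starts_before : starts_before (next_constraints b n r D d C N) (next_approx b n r C e).
Proof.
  intros s Hs HD' w Hw Hfix. pose proof (proj1 Hs) as Hls.
  unfold next_constraints in HD'. apply Choldsl_app in HD' as [HD HD'].
  apply Choldsl_app in HD' as [HCs HD']. apply Choldsl_app in HD' as [HNs Hnear].
  apply (Choldsl_csubst n d C s Hls) in HCs.
  apply (fun H => Choldsl_In [N] s N H (or_introl eq_refl)) in HNs.
  rewrite bound_constraints_holds in Hnear.
  unfold next_approx. rewrite (leval_lsubst n) by auto.
  assert (Hdw : dle b (leval d s) w) by (apply (proj2 (proj2 Hinv)); auto).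
  pose proof (region_ahead s Hls HCs Hnear) as Hbetween.
  assert (Hbw : dle b (leval bj s) w).
  { apply Rnot_lt_le. intros Hwb.
    pose proof (Hbetween w Hdw Hwb) as HCw.
    destruct (valid_snoc C e s w Hval Hls HCw) as [_ [_ Hsw]].
    exact (rejection_no_fixpoint n r C e N s w Hls HN HNs HCw (sem_det _ _ _ _ Hsw Hfix)). }
  assert (Hbefore : forall x, Choldsl C (s ++ [x]) -> dle b x w -> dle b (leval e (s ++ [x])) w).
  { intros x HCx Hxw. destruct (valid_snoc C e s x Hval Hls HCx) as [_ [Hx Hsx]].
    unfold dle, sgn in *; destruct b.
    - pose proof (sem_mono_snoc n t1 s w x w _ Hreg1 Hs Hw Hx ltac:(lra) Hfix Hsx). lra.
    - pose proof (sem_mono_snoc n t1 s x w _ w Hreg1 Hs Hx Hw ltac:(lra) Hsx Hfix). lra. }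
  pose proof (region_before_pick s _ Hls HCs) as Hdb.
  destruct (Req_dec (leval d s) (leval bj s)) as [Heq|Hneq].
  - rewrite <- Heq. apply Hbefore; auto.
  - rewrite (leval_snoc n) by auto. apply (affine_limit_dle b _ _ (leval d s)); [by_direction b|].
    intros x Hdx Hxb. rewrite <- (leval_snoc n) by auto.
    apply Hbefore; [apply Hbetween; auto|by_direction b].
Qed.

(** If [e] moved [d r] backwards, [d r] would be pre-fixed, hence the extremal
    fixed point itself. *)
Lemma step_start : dle b (leval d r) (leval e (r ++ [leval d r])).
Proof.
  destruct (fix_extremal b n t1 r Hreg1 Hr) as [v [Hv Hext]].
  destruct (valid_snoc C e r (leval d r) Hval length_r HCd) as [_ [Hd01 Hsd]].
  apply Rnot_lt_le. intros Hc.
  pose proof (Hext (leval d r) _ Hd01 Hsd ltac:(unfold dle; lra)) as Hvd.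
  apply sem_fixterm in Hv as [Hv01 [Hvfix _]].
  pose proof (proj2 (proj2 Hinv) r Hr (proj1 Hinv) v Hv01 Hvfix) as Hdv.
  assert (Ev : leval d r = v) by by_direction b.
  rewrite Ev in Hsd, Hc. rewrite (sem_det _ _ _ _ Hsd Hvfix) in Hc. lra.
Qed.

Lemma step_at_pick : dle b (leval bj r) (leval e (r ++ [leval bj r])).
Proof.
  pose proof length_r as Hrl.
  destruct (Req_dec (leval d r) (leval bj r)) as [Heq|Hneq].
  { rewrite <- Heq. exact step_start. }
  pose proof (region_before_pick r _ Hrl HCd).
  rewrite (leval_snoc n) by auto. apply (affine_no_fixpoint_dle b _ _ (leval d r)).
  - by_direction b.
  - rewrite <- (leval_snoc n) by auto. exact step_start.
  - intros x Hdx Hxb. rewrite <- (leval_snoc n) by auto.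
    apply (rejection_no_fixpoint n r C e N r x Hrl HN (rejection_holds n r C e N Hrl HN)).
    apply region_ahead; auto. apply pick_bound_ahead.
Qed.

Lemma step_invariant : loop_invariant (next_constraints b n r D d C N) (next_approx b n r C e).
Proof.
  pose proof length_r as Hrl.
  assert (HD'r : Choldsl (next_constraints b n r D d C N) r).
  { unfold next_constraints. repeat (apply Choldsl_app; split).
    - apply Hinv.
    - apply (Choldsl_csubst n d C r Hrl); auto.
    - constructor; [apply (rejection_holds n r C e N Hrl HN)|constructor].
    - apply bound_constraints_holds, pick_bound_ahead. }
  split; [exact HD'r|split; [|exact step_starts_before]].
  destruct (fix_extremal b n t1 r Hreg1 Hr) as [v [Hv _]].
  apply sem_fixterm in Hv as [Hv01 [Hvfix _]].
  pose proof (step_starts_before r Hr HD'r v Hv01 Hvfix) as Hd'v.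
  pose proof (region_before_pick r _ Hrl HCd) as Hdb.
  pose proof step_at_pick as Hbe. pose proof (proj1 (proj2 Hinv)) as Hd01.
  unfold next_approx in *. rewrite (leval_lsubst n) in * by auto.
  by_direction b.
Qed.

Lemma step_progress : dle b (leval d r) (leval (next_approx b n r C e) r) /\
  forall x, Choldsl C (r ++ [x]) -> dlt b x (leval (next_approx b n r C e) r).
Proof.
  pose proof length_r as Hrl.
  unfold next_approx. rewrite (leval_lsubst n) by auto.
  pose proof step_at_pick as Hbe. pose proof (region_before_pick r _ Hrl HCd).
  split; [by_direction b|].
  intros x HCx. pose proof (region_before_pick r x Hrl HCx) as Hxb.
  destruct (Req_dec x (leval bj r)) as [->|Hne]; [|by_direction b].
  destruct (Req_dec (leval e (r ++ [leval bj r])) (leval bj r)) as [E|Hne]; [|by_direction b].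
  exfalso.
  exact (rejection_no_fixpoint n r C e N r _ Hrl HN (rejection_holds n r C e N Hrl HN) HCx E).
Qed.

End Step.

Section Exit.
Variables (D : list constr) (d : linexp) (C : list constr) (e : linexp).
Hypothesis Hinv : loop_invariant D d.
Hypothesis Hval : valid_on (S n) t1 C e.
Hypothesis HCd : Choldsl C (r ++ [leval d r]).

Lemma exit_identity_sound : coef n e = 1 -> leval (ltrunc n e) r = 0 ->
  sound_result n (fixterm b t1) r (D ++ map (csubst n d) C ++
    [CLe (ltrunc n e) (lconstant 0); CLe (lconstant 0) (ltrunc n e)], d).
Proof.
  intros Hq Hh. split; simpl.
  - repeat (apply Choldsl_app; split); [apply Hinv|apply (Choldsl_csubst n d C r length_r); auto|].
    repeat constructor; simpl; rewrite leval_lconstant; lra.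
  - intros s Hs H. apply Choldsl_app in H as [HD H]. apply Choldsl_app in H as [HCs Hh0].
    apply (Choldsl_csubst n d C s Hs) in HCs.
    pose proof (Choldsl_In _ _ _ Hh0 (or_introl eq_refl)) as H1.
    pose proof (Choldsl_In _ _ _ Hh0 (or_intror (or_introl eq_refl))) as H2.
    simpl in H1, H2. rewrite leval_lconstant in H1, H2.
    destruct (valid_snoc C e s (leval d s) Hval Hs HCs) as [Hcs [Hd01 Hsem]].
    rewrite (leval_snoc n), Hq in Hsem by auto.
    replace (leval (ltrunc n e) s + 1 * leval d s) with (leval d s) in Hsem by lra.
    split; [exact Hcs|]. apply sem_fixterm. split; [exact Hd01|split; [exact Hsem|]].
    intros w Hw Hfw. apply (proj2 (proj2 Hinv) s); auto.
Qed.

(** A fixed point strictly between [d s] and [fixpoint_expr n e s] would lie in the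
    region [C], where [e] has no other fixed point. *)
Lemma exit_fixpoint_expr_sound : coef n e <> 1 -> Choldsl C (r ++ [leval (fixpoint_expr n e) r]) ->
  sound_result n (fixterm b t1) r
    (D ++ map (csubst n d) C ++ map (csubst n (fixpoint_expr n e)) C, fixpoint_expr n e).
Proof.
  intros Hq HCf. split; simpl.
  - repeat (apply Choldsl_app; split); [apply Hinv| |];
      apply (Choldsl_csubst n _ C r length_r); auto.
  - intros s Hs H. apply Choldsl_app in H as [HD H]. apply Choldsl_app in H as [HCs HCfs].
    apply (Choldsl_csubst n d C s Hs) in HCs. apply (Choldsl_csubst n _ C s Hs) in HCfs.
    destruct (valid_snoc C e s _ Hval Hs HCfs) as [Hcs [Hf01 Hsem]].
    rewrite (leval_fixpoint_expr n e s Hs Hq) in Hsem.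
    split; [exact Hcs|]. apply sem_fixterm. split; [exact Hf01|split; [exact Hsem|]].
    intros w Hw Hfw. pose proof (proj2 (proj2 Hinv) s Hcs HD w Hw Hfw) as Hdw.
    apply Rnot_lt_le. intros Hwf.
    assert (HCw : Choldsl C (s ++ [w])).
    { unfold dle, sgn in *; destruct b;
        [apply (Choldsl_convex n C s (leval (fixpoint_expr n e) s) (leval d s))
        |apply (Choldsl_convex n C s (leval d s) (leval (fixpoint_expr n e) s))]; auto; lra. }
    destruct (valid_snoc C e s w Hval Hs HCw) as [_ [_ Hsw]].
    rewrite (fixpoint_expr_unique n e s w Hs Hq (sem_det _ _ _ _ Hsw Hfw)) in Hwf. lra.
Qed.

Lemma exit_sound res : exit_result n r C e D d res -> sound_result n (fixterm b t1) r res.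
Proof.
  intros [[Hq [Hh ->]]|[Hq [HCf ->]]];
    [apply exit_identity_sound|apply exit_fixpoint_expr_sound]; auto.
Qed.

End Exit.

Hypothesis Hcorr1 : alg_correct (S n) t1.

Lemma first_call_sound k D d C e : loop_invariant D d ->
  alg k (S n) t1 (r ++ [leval d r]) = Some (C, e) ->
  Choldsl C (r ++ [leval d r]) /\ valid_on (S n) t1 C e.
Proof.
  intros Hinv EA. exact (Hcorr1 _ k (C, e) (in_cube_approx D d Hinv) EA).
Qed.

Lemma loop_sound k : forall j D d res, loop_invariant D d ->
  loop (alg k (S n) t1) n r b j D d = Some res -> sound_result n (fixterm b t1) r res.
Proof.
  induction j as [|j IH]; intros D d res Hinv H; [discriminate|]. cbn [loop] in H.
  destruct (alg k (S n) t1 (r ++ [leval d r])) as [[C e]|] eqn:EA;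
    [|rewrite loop_body_none in H by auto; discriminate].
  destruct (first_call_sound k D d C e Hinv EA) as [HCd Hval].
  pose proof (bounds_ahead_nonempty C e _ Hval HCd (proj1 (proj2 Hinv))) as Hne.
  destruct (loop_body_cases (loop (alg k (S n) t1) n r b j) _ n r b D d C e EA Hne)
    as [[res' [E Hx]]|[N [HN E]]];
    rewrite E in H.
  - injection H as <-. exact (exit_sound D d C e Hinv Hval HCd res' Hx).
  - exact (IH _ _ _ (step_invariant D d C e N Hinv Hval HCd HN) H).
Qed.

Hypothesis Hterm1 : alg_terminates (S n) t1.

(** Every round either exits with a result independent of the fuel, or continues with
    the same next state for every fuel that lets the body terminate. *)
Lemma loop_round D d : loop_invariant D d -> exists C e F0,
  alg F0 (S n) t1 (r ++ [leval d r]) = Some (C, e) /\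
  Choldsl C (r ++ [leval d r]) /\ valid_on (S n) t1 C e /\ bounds_ahead b n C <> [] /\
  ((exists res, exit_result n r C e D d res /\
      forall k j, loop (alg k (S n) t1) n r b (S j) D d =
        match alg k (S n) t1 (r ++ [leval d r]) with Some _ => Some res | None => None end) \/
   (exists N, rejection n r C e N /\
      forall k j, loop (alg k (S n) t1) n r b (S j) D d =
        match alg k (S n) t1 (r ++ [leval d r]) with
        | Some _ => loop (alg k (S n) t1) n r b j (next_constraints b n r D d C N)
                      (next_approx b n r C e)
        | None => None end)).
Proof.
  intros Hinv.
  destruct (Hterm1 _ (in_cube_approx D d Hinv)) as [F0 [[C e] EA0]].
  destruct (first_call_sound F0 D d C e Hinv EA0) as [HCd Hval].
  pose proof (bounds_ahead_nonempty C e _ Hval HCd (proj1 (proj2 Hinv))) as Hne.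
  exists C, e, F0. do 4 (split; auto).
  assert (Hcases : forall k j, alg k (S n) t1 (r ++ [leval d r]) = Some (C, e) ->
    (exists res, loop (alg k (S n) t1) n r b (S j) D d = Some res /\ exit_result n r C e D d res) \/
    (exists N, rejection n r C e N /\ loop (alg k (S n) t1) n r b (S j) D d =
       loop (alg k (S n) t1) n r b j (next_constraints b n r D d C N) (next_approx b n r C e)))
    by (intros k j EA;
        exact (loop_body_cases (loop (alg k (S n) t1) n r b j) _ n r b D d C e EA Hne)).
  destruct (Hcases F0 0%nat EA0) as [[res0 [_ Hx0]]|[N0 [HN0 _]]]; [left|right].
  - exists res0. split; auto. intros k j.
    destruct (alg k (S n) t1 (r ++ [leval d r])) as [rho|] eqn:EA;
      [|cbn [loop]; apply loop_body_none; auto].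
    rewrite (alg_det _ _ _ _ _ _ _ EA EA0) in EA.
    destruct (Hcases k j EA) as [[res [-> Hx]]|[N [HN _]]].
    + f_equal. exact (exit_result_unique _ _ _ _ _ _ _ _ Hx Hx0).
    + destruct (rejection_not_exit _ _ _ _ _ _ _ _ HN Hx0).
  - exists N0. split; auto. intros k j.
    destruct (alg k (S n) t1 (r ++ [leval d r])) as [rho|] eqn:EA;
      [|cbn [loop]; apply loop_body_none; auto].
    rewrite (alg_det _ _ _ _ _ _ _ EA EA0) in EA.
    destruct (Hcases k j EA) as [[res [_ Hx]]|[N [HN ->]]].
    + destruct (rejection_not_exit _ _ _ _ _ _ _ _ HN0 Hx).
    + rewrite (rejection_unique _ _ _ _ _ _ HN HN0). reflexivity.
Qed.

Definition covers (Rem : list result) (d : linexp) := forall x fuel rho, 0 <= x <= 1 ->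
  dle b (leval d r) x -> alg fuel (S n) t1 (r ++ [x]) = Some rho -> In rho Rem.

Lemma covers_first Rem D d C e F0 : loop_invariant D d -> covers Rem d ->
  alg F0 (S n) t1 (r ++ [leval d r]) = Some (C, e) -> In (C, e) Rem.
Proof.
  intros Hinv Hcov EA. apply (Hcov (leval d r) F0); [apply Hinv|unfold dle; lra|exact EA].
Qed.

(** The body returns [(C, e)] only at points that the next approximation has passed. *)
Lemma covers_next Rem D d C e N : loop_invariant D d -> valid_on (S n) t1 C e ->
  Choldsl C (r ++ [leval d r]) -> rejection n r C e N -> covers Rem d ->
  covers (remove result_eq_dec (C, e) Rem) (next_approx b n r C e).
Proof.
  intros Hinv Hval HCd HN Hcov x fuel rho Hx Hdx E.
  destruct (step_progress D d C e N Hinv Hval HCd HN) as [Hdd' Hpast].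
  apply in_in_remove.
  - intros ->. assert (Hin : in_cube (S n) (r ++ [x])) by (apply in_cube_snoc; auto).
    pose proof (Hpast x (proj1 (Hcorr1 _ _ _ Hin E))). by_direction b.
  - apply (Hcov x fuel rho Hx); [by_direction b|exact E].
Qed.

Lemma loop_terminates : forall m Rem D d, (length Rem <= m)%nat ->
  loop_invariant D d -> covers Rem d ->
  exists K, forall k j, (K <= k)%nat -> (K <= j)%nat ->
    exists res, loop (alg k (S n) t1) n r b j D d = Some res.
Proof.
  induction m as [|m IH]; intros Rem D d Hlen Hinv Hcov;
    destruct (loop_round D d Hinv) as [C [e [F0 [EA0 [HCd [Hval [Hne Hround]]]]]]];
    pose proof (covers_first Rem D d C e F0 Hinv Hcov EA0) as HinRem.
  { destruct Rem; [destruct HinRem|simpl in Hlen; lia]. }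
  destruct Hround as [[res [_ Hexit]]|[N [HN Hnext]]].
  - exists (S F0). intros k [|j] Hk Hj; [lia|]. exists res.
    rewrite Hexit, (alg_mono_le F0 k _ _ _ _ ltac:(lia) EA0). reflexivity.
  - pose proof (remove_length_lt result_eq_dec Rem (C, e) HinRem).
    destruct (IH (remove result_eq_dec (C, e) Rem) _ _ ltac:(lia)
                 (step_invariant D d C e N Hinv Hval HCd HN)
                 (covers_next Rem D d C e N Hinv Hval HCd HN Hcov)) as [K HK].
    exists (S (Nat.max F0 K)). intros k [|j] Hk Hj; [lia|].
    rewrite Hnext, (alg_mono_le F0 k _ _ _ _ ltac:(lia) EA0). apply HK; lia.
Qed.

Variable Lp : list result.
Hypothesis HLp :
  forall r' fuel rho, in_cube (S n) r' -> alg fuel (S n) t1 r' = Some rho -> In rho Lp.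

Lemma loop_results_complete : forall m Rem D d, (length Rem <= m)%nat ->
  loop_invariant D d -> covers Rem d ->
  forall k j res, loop (alg k (S n) t1) n r b j D d = Some res ->
  In res (loop_results b n Lp m D d).
Proof.
  induction m as [|m IH]; intros Rem D d Hlen Hinv Hcov k [|j] res H; try discriminate;
    destruct (loop_round D d Hinv) as [C [e [F0 [EA0 [HCd [Hval [Hne Hround]]]]]]];
    pose proof (covers_first Rem D d C e F0 Hinv Hcov EA0) as HinRem.
  { destruct Rem; [destruct HinRem|simpl in Hlen; lia]. }
  pose proof (HLp _ F0 _ (in_cube_approx D d Hinv) EA0) as HCe.
  destruct Hround as [[res0 [Hx Hexit]]|[N [HN Hnext]]]; [rewrite Hexit in H|rewrite Hnext in H];
    (destruct (alg k (S n) t1 (r ++ [leval d r])); [|discriminate]).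
  - injection H as <-. exact (exit_in_loop_results b n Lp m r C e D d res0 HCe Hx).
  - pose proof (remove_length_lt result_eq_dec Rem (C, e) HinRem).
    apply (next_in_loop_results b n Lp m r C e D d N res HCe HN Hne).
    exact (IH (remove result_eq_dec (C, e) Rem) _ _ ltac:(lia)
              (step_invariant D d C e N Hinv Hval HCd HN)
              (covers_next Rem D d C e N Hinv Hval HCd HN Hcov) k j res H).
Qed.

End FixLoop.

Lemma good_fix b n t1 : wf (S n) t1 -> alg_good (S n) t1 -> alg_good n (fixterm b t1).
Proof.
  intros Hw [T1 [Co1 [Lp HLp]]]. pose proof (sem_regular_wf t1 (S n) Hw) as Hreg1.
  set (d0 := lconstant (if b then 1 else 0)).
  assert (Hinv0 : forall r, in_cube n r -> loop_invariant n t1 b r [] d0).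
  { intros r Hr. unfold d0. split; [constructor|split].
    - rewrite leval_lconstant; destruct b; lra.
    - intros s _ _ w Hw' _. rewrite leval_lconstant. by_direction b. }
  assert (Hcov0 : forall r, in_cube n r -> covers n t1 b r Lp d0).
  { intros r Hr x fuel rho Hx _ E. apply (HLp (r ++ [x]) fuel); auto. apply in_cube_snoc; auto. }
  split; [|split].
  - intros r Hr.
    destruct (loop_terminates n t1 b r Hreg1 Hr Co1 T1 (length Lp) Lp [] d0 (le_n _)
                (Hinv0 r Hr) (Hcov0 r Hr)) as [K HK].
    destruct (HK K K (le_n _) (le_n _)) as [res Hres].
    exists (S K), res. rewrite alg_fixterm. exact Hres.
  - intros r [|k] res Hr H; [discriminate|]. rewrite alg_fixterm in H.
    exact (loop_sound n t1 b r Hreg1 Hr Co1 k k [] d0 res (Hinv0 r Hr) H).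
  - exists (loop_results b n Lp (length Lp) [] d0).
    intros r [|k] res Hr H; [discriminate|]. rewrite alg_fixterm in H.
    exact (loop_results_complete n t1 b r Hreg1 Hr Co1 T1 Lp HLp (length Lp) Lp [] d0 (le_n _)
             (Hinv0 r Hr) (Hcov0 r Hr) k k res H).
Qed.

Lemma good_wf t : forall n, wf n t -> alg_good n t.
Proof.
  induction t as [i| | |c t IHt|t1 IHt1 t2 IHt2|t1 IHt1 t2 IHt2|t1 IHt1 t2 IHt2
                 |t1 IHt1 t2 IHt2|t IHt|t IHt]; intros m Hw; simpl in Hw.
  - apply (good_atom m (TVar i) (lvar i)); [reflexivity|].
    intros s _. simpl. rewrite leval_lvar. reflexivity.
  - apply (good_atom m TZero (lconstant 0)); [reflexivity|].
    intros s _. simpl. rewrite leval_lconstant. reflexivity.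
  - apply (good_atom m TOne (lconstant 1)); [reflexivity|].
    intros s _. simpl. rewrite leval_lconstant. reflexivity.
  - apply good_scale, IHt, Hw.
  - apply good_join; [apply IHt1|apply IHt2]; apply Hw.
  - apply good_meet; [apply IHt1|apply IHt2]; apply Hw.
  - apply good_oplus; [apply IHt1|apply IHt2]; apply Hw.
  - apply good_odot; [apply IHt1|apply IHt2]; apply Hw.
  - exact (good_fix false m t Hw (IHt (S m) Hw)).
  - exact (good_fix true m t Hw (IHt (S m) Hw)).
Qed.

End Algorithm.

Lemma filter_prop {A : Type} (P : A -> Prop) (l : list A) :
  exists l', forall x, In x l' <-> In x l /\ P x.
Proof.
  induction l as [|a l [l' IH]]; [exists []; simpl; tauto|].
  destruct (classic (P a)) as [Ha|Ha]; [exists (a :: l')|exists l'];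
    intros x; simpl; rewrite IH; intuition congruence.
Qed.

Theorem mainTheorem2
  (pf : list constr -> list R -> constr)
  (pmin : list linexp -> list R -> linexp)
  (pmax : list linexp -> list R -> linexp)
  (Hpf : pick_false_spec pf) (Hpmin : pick_min_spec pmin) (Hpmax : pick_max_spec pmax)
  (n : nat) (t : term) (Ht : wf n t) :
  (forall r, in_cube n r ->
     (exists res, alg_returns pf pmin pmax n t r res) /\
     (forall res, alg_returns pf pmin pmax n t r res ->
        Choldsl (fst res) r /\
        (forall s, length s = n -> Choldsl (fst res) s ->
           in_cube n s /\ sem t s (leval (snd res) s)))) /\
  (exists L : list result,
     (forall r res, in_cube n r -> alg_returns pf pmin pmax n t r res -> In res L) /\
     (forall res, In res L -> exists r, in_cube n r /\ alg_returns pf pmin pmax n t r res) /\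
     represents n L t).
Proof.
  destruct (good_wf pf pmin pmax Hpf Hpmin Hpmax t n Ht) as [Term [Corr [L0 HL0]]].
  destruct (filter_prop (fun res => exists r, in_cube n r /\ alg_returns pf pmin pmax n t r res) L0)
    as [L HL].
  assert (HinL : forall r res, in_cube n r -> alg_returns pf pmin pmax n t r res -> In res L).
  { intros r res Hr [fuel H]. apply HL.
    split; [eapply HL0; eauto|exists r; split; [exact Hr|exists fuel; exact H]]. }
  split.
  - intros r Hr. split.
    + destruct (Term r Hr) as [fuel [res H]]. exists res, fuel; auto.
    + intros res [fuel H]. exact (Corr r fuel res Hr H).
  - exists L. split; [exact HinL|split; [intros res Hin; apply HL in Hin; tauto|split]].
    + intros r Hr. destruct (Term r Hr) as [fuel [res H]].
      exists res. split; [apply (HinL r res Hr); exists fuel; exact H|].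
      exact (proj1 (Corr r fuel res Hr H)).
    + intros Ce r Hin Hr HC. apply HL in Hin as [_ [r0 [Hr0 [fuel H]]]].
      exact (proj2 (proj2 (Corr r0 fuel Ce Hr0 H) r (proj1 Hr) HC)).
Qed.
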